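(* Consider the networked $SIRS$-$V_o$ system without media actuator (i.e. $m\equiv 0$) described in the context, with initial condition at time $t_0$ satisfying $o_i(t_0),s_i(t_0),x_i(t_0),r_i(t_0),v_i(t_0)\in[0,1]$ and $s_i(t_0)+x_i(t_0)+r_i(t_0)+v_i(t_0)=1$ for all $i\in[n]$. Then for all $t>t_0$ and all $i\in[n]$: $s_i(t)+x_i(t)+r_i(t)+v_i(t)=1$ and $s_i(t),x_i(t),r_i(t),v_i(t)\in[0,1]$.
   Context: There are $n$ nodes, $[n]=\{1,\dots,n\}$. All parameters are real and nonnegative: $a_{ij}$ (opinion-network weights), $\beta_{ij}$ (infection rates), $\gamma_i$ (recovery rates), $\omega_i$ (loss of natural immunity rates), $\delta_i$ (loss of vaccine immunity rates), $\eta^{\min}_{ij}$ and $\Delta\eta_{ij}$ (strategy-imitation rates). Let $A=[a_{ij}]$, $B=[\beta_{ij}]$, $H_{\min}=[\eta^{\min}_{ij}]$, $\Delta H=[\Delta\eta_{ij}]$. For a square matrix $M$, $k_i[M]=\sum_j M_{ij}$, $\widetilde K[M]=\mathrm{diag}(k_1[M],\dots,k_n[M])$ and $L[M]=\widetilde K[M]-M$. Let $\widetilde G=\mathrm{diag}(\gamma_i)$, $\widetilde W=\mathrm{diag}(\omega_i)$, $\widetilde D=\mathrm{diag}(\delta_i)$, and for $o\in\mathbb{R}^n$ let $H(o)=\mathrm{diag}(o)\Delta H+H_{\min}$. The state is $(o,s,x,r,v)\in(\mathbb{R}^n)^5$ (opinion on disease seriousness, susceptible, infected, recovered, vaccinated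 fractions), with $\widetilde S=\mathrm{diag}(s)$, $\widetilde R=\mathrm{diag}(r)$, and dynamics $\dot o=A(x-o)-2L[A]o$, $\dot s=\widetilde Dv-\widetilde S(Bx+H(o)v)+\widetilde Wr$, $\dot x=\widetilde SBx-\widetilde Gx$, $\dot r=\widetilde Gx-\widetilde Wr-\widetilde RH(o)v$, $\dot v=(\widetilde S+\widetilde R)H(o)v-\widetilde Dv$. *)

From HB Require Import structures.
From mathcomp Require Import all_boot all_order all_algebra.
From mathcomp Require Import all_classical all_reals all_analysis.
Set Implicit Arguments. Unset Strict Implicit. Unset Printing Implicit Defensive.
Import Order.TTheory GRing.Theory Num.Theory.
Import numFieldNormedType.Exports.
Local Open Scope ring_scope.
Local Open Scope classical_set_scope.

Section SIRSVo.
Variables (R : realType) (n : nat).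

Definition kdeg (M : 'I_n -> 'I_n -> R) (i : 'I_n) : R := \sum_(j < n) M i j.

Definition mxv (M : 'I_n -> 'I_n -> R) (y : 'I_n -> R) (i : 'I_n) : R :=
  \sum_(j < n) M i j * y j.

Definition lapv (M : 'I_n -> 'I_n -> R) (y : 'I_n -> R) (i : 'I_n) : R :=
  kdeg M i * y i - mxv M y i.

Definition Hmat (DH Hmin : 'I_n -> 'I_n -> R) (o : 'I_n -> R) : 'I_n -> 'I_n -> R :=
  fun i j => o i * DH i j + Hmin i j.

Definition SIRSVo_solution
  (A B Hmin DH : 'I_n -> 'I_n -> R) (gam om del : 'I_n -> R)
  (t0 : R) (o s x r v : R -> 'I_n -> R) : Prop :=
  (forall i : 'I_n,
     (fun u => o u i) y @[y --> t0^'+] --> o t0 i /\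
     (fun u => s u i) y @[y --> t0^'+] --> s t0 i /\
     (fun u => x u i) y @[y --> t0^'+] --> x t0 i /\
     (fun u => r u i) y @[y --> t0^'+] --> r t0 i /\
     (fun u => v u i) y @[y --> t0^'+] --> v t0 i) /\
  (forall t : R, t0 < t -> forall i : 'I_n,
     is_derive t 1 (fun u => o u i)
       (mxv A (fun j => x t j - o t j) i - 2 * lapv A (o t) i) /\
     is_derive t 1 (fun u => s u i)
       (del i * v t i - s t i * (mxv B (x t) i + mxv (Hmat DH Hmin (o t)) (v t) i)
        + om i * r t i) /\
     is_derive t 1 (fun u => x u i)
       (s t i * mxv B (x t) i - gam i * x t i) /\
     is_derive t 1 (fun u => r u i)
       (gam i * x t i - om i * r t i - r t i * mxv (Hmat DH Hmin (o t)) (v t) i) /\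
     is_derive t 1 (fun u => v u i)
       ((s t i + r t i) * mxv (Hmat DH Hmin (o t)) (v t) i - del i * v t i)).

End SIRSVo.

From HB Require Import structures.
From mathcomp Require Import all_boot all_order all_algebra.
From mathcomp Require Import all_classical all_reals all_analysis.
From mathcomp Require Import ring lra.
Import Order.TTheory GRing.Theory Num.Theory.
Import numFieldNormedType.Exports.
Local Open Scope ring_scope.
Local Open Scope classical_set_scope.
Set Implicit Arguments. Unset Strict Implicit. Unset Printing Implicit Defensive.

(* The right-hand sides for [s, x, r, v] sum to zero, so [s + x + r + v] is
   conserved.  For the bounds, view the [6n] functions [s, x, r, v, o, 1 - o]
   as one family.  On states bounded by [C] the vector field is quasi-positive:
   at a component equal to the negative minimum [m] of the family, its rate is
   at least [K m], because each term of the rate is a nonnegative coefficient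
   times a quantity [>= m], or a product whose negative factors are [>= m] (for
   [1 - o] one also uses [x = 1 - s - r - v]).  Weighting the family by
   [exp (-(|K| + 1) t)], a negative minimum of the weighted family over
   [[t0, t1]] is attained at some [tau > t0]; there its left derivative is
   [<= 0], while the bound [K m] makes it positive. *)

Section RealAnalysis.
Variable R : realType.
Implicit Types (f : R -> R).

Lemma is_derive_left_min_le0 f (a c df : R) : a < c -> is_derive c 1 f df ->
  (forall t, a < t < c -> f c <= f t) -> df <= 0.
Proof.
move=> ac [fd <-] cmin.
rewrite ['D_1 f c]cvg_at_leftE; last exact: fd.
apply: limr_le.
  rewrite -(cvg_at_leftE (fun h => h^-1 *: ((f \o shift c) _ - f c))) //.
  apply: cvg_trans fd; apply: cvg_app.
  move=> A [e egt0 Ae]; exists e => // x xe xgt0; apply: Ae => //.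
  exact/ltr0_neq0.
near=> h; apply: mulr_le0_ge0.
  by rewrite invr_le0; apply: ltW; near: h; exists 1 => /=.
rewrite subr_ge0 [_%:A]mulr1; apply: cmin; near: h.
exists (c - a); first by rewrite /= subr_gt0.
move=> h; rewrite /= distrC subr0 => /ltr_normlP[].
rewrite ltrBrDl ltrBlDl => -> _ /= hneg; lra.
Unshelve. all: by end_near. Qed.

Lemma within_continuous_right_cvg f (t0 t1 : R) : t0 < t1 ->
  (forall u, t0 < u <= t1 -> derivable f u 1) ->
  f y @[y --> t0^'+] --> f t0 -> {within `[t0, t1], continuous f}.
Proof.
have dcont u : derivable f u 1 -> {for u, continuous f}.
  by move=> du; apply/differentiable_continuous/derivable1_diffP.
move=> t01 df ft0; apply/continuous_within_itvP => //; split => //.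
- by move=> u; rewrite in_itv /= => /andP[t0u ut1]; apply/dcont/df; lra.
- by apply/cvg_at_left_filter/dcont/df; lra.
Qed.

Lemma is_derive0_eq_right f (t0 t : R) : t0 < t ->
  (forall u, t0 < u -> is_derive u 1 f 0) -> f y @[y --> t0^'+] --> f t0 ->
  f t = f t0.
Proof.
move=> t0t df ft0.
have fcont : {within `[t0, t], continuous f}.
  by apply: within_continuous_right_cvg => // u /andP[t0u _]; have [] := df u t0u.
have [c _] := @MVT R f (fun=> 0) t0 t t0t
  (fun u uin => df u (andP uin).1) fcont.
by rewrite mul0r => /eqP; rewrite subr_eq0 => /eqP.
Qed.

Lemma is_derive_expR_scale (M u : R) :
  is_derive u 1 (fun u => expR (- (M * u))) (expR (- (M * u)) * - M).
Proof.
apply: (is_derive1_comp (f := expR) (g := fun u => - (M * u))).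
have := is_deriveN (is_deriveZ M (is_derive_id u (1 : R))).
by rewrite /GRing.scale /= mulr1.
Qed.

Lemma ler_sum_norm (I : finType) (F : I -> R) i : F i <= \sum_j `|F j|.
Proof.
apply: le_trans (ler_norm _) _.
by rewrite (bigD1 i) //= lerDl sumr_ge0.
Qed.

Lemma within_continuous_bounded f (a b : R) : a <= b ->
  {within `[a, b], continuous f} -> exists C, forall u, u \in `[a, b]%R -> `|f u| <= C.
Proof.
move=> ab fc; have [c _ fmax] := EVT_max ab fc; have [d _ fmin] := EVT_min ab fc.
exists (`|f c| + `|f d|) => u uab; have := fmax u uab; have := fmin u uab.
have := ler_norm (f c); have := ler_norm (- f d); rewrite normrN ler_norml.
have := normr_ge0 (f c); have := normr_ge0 (f d); lra.
Qed.

Lemma EVT_min_family (I : finType) (Z : I -> R -> R) (a b : R) : a <= b ->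
  (forall p, {within `[a, b], continuous (Z p)}) -> I ->
  exists q, exists2 tau, tau \in `[a, b]%R &
    forall p u, u \in `[a, b]%R -> Z q tau <= Z p u.
Proof.
move=> ab Zc i0.
have /choice[tf tfmin] : forall p, exists c,
    c \in `[a, b]%R /\ forall u, u \in `[a, b]%R -> Z p c <= Z p u.
  by move=> p; have [c cab cmin] := EVT_min ab (Zc p); exists c.
exists [arg min_(q < i0) Z q (tf q)]%O; case: arg_minP => // q _ qmin.
exists (tf q); first exact: (tfmin q).1.
by move=> p u uab; apply: le_trans (qmin p isT) ((tfmin p).2 u uab).
Qed.

Section Invariance.
Variables (I : finType) (Y DY : I -> R -> R) (t0 t1 : R).
Hypothesis t01 : t0 < t1.
Hypothesis dY : forall p u, t0 < u <= t1 -> is_derive u 1 (Y p) (DY p u).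
Hypothesis Yt0 : forall p, Y p y @[y --> t0^'+] --> Y p t0.
Hypothesis Y0 : forall p, 0 <= Y p t0.

Lemma nonneg_invariant_linear (K : R) :
  (forall q u, t0 < u <= t1 -> Y q u < 0 -> (forall p, Y q u <= Y p u) ->
     K * Y q u <= DY q u) ->
  forall p, 0 <= Y p t1.
Proof.
move=> hK p1; rewrite leNgt; apply/negP => Yp1.
pose M : R := `|K| + 1; pose g u : R := expR (- (M * u)).
pose Z p u := g u * Y p u.
have dZ p u : t0 < u <= t1 ->
    is_derive u 1 (Z p) (g u * DY p u + Y p u * (g u * - M)).
  by move=> tu; have := is_deriveM (is_derive_expR_scale M u) (dY p tu).
have Zc p : {within `[t0, t1], continuous (Z p)}.
  apply: within_continuous_right_cvg => // [u tu|]; first by have [] := dZ p u tu.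
  apply: cvgM; last exact: Yt0.
  apply: cvg_at_right_filter.
  by apply/differentiable_continuous/derivable1_diffP; have [] := is_derive_expR_scale M t0.
have [q [tau tau_in Zmin]] := EVT_min_family (ltW t01) Zc p1.
have t1_in : t1 \in `[t0, t1]%R by rewrite in_itv /= (ltW t01) lexx.
have Zq_neg : Z q tau < 0.
  by apply: le_lt_trans (Zmin p1 t1 t1_in) _; rewrite /Z pmulr_rlt0 ?expR_gt0.
have Yq_neg : Y q tau < 0 by move: Zq_neg; rewrite /Z pmulr_rlt0 ?expR_gt0.
have Yq_min p : Y q tau <= Y p tau by rewrite -(ler_pM2l (expR_gt0 (- (M * tau)))) Zmin.
have t0tau : t0 < tau.
  rewrite lt_neqAle (itvP tau_in) andbT; apply/eqP => t0E.
  by move: Yq_neg; rewrite -t0E ltNge Y0.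
have tau_le : t0 < tau <= t1 by rewrite t0tau (itvP tau_in).
have := hK q tau tau_le Yq_neg Yq_min.
have left_in t : t0 < t < tau -> t \in `[t0, t1]%R.
  by case/andP=> t0t ttau; rewrite in_itv /= (ltW t0t) (le_trans (ltW ttau)) ?(itvP tau_in).
have := is_derive_left_min_le0 t0tau (dZ q tau tau_le) (fun t ht => Zmin q t (left_in t ht)).
rewrite mulrCA mulrN -mulrDr pmulr_rle0 ?expR_gt0 // subr_le0 /M.
by move: Yq_neg (ler_norm K); nra.
Qed.

Lemma nonneg_invariant :
  (forall C q, exists K, forall u, t0 < u <= t1 -> Y q u < 0 ->
     (forall p, Y q u <= Y p u /\ `|Y p u| <= C) -> K * Y q u <= DY q u) ->
  forall p, 0 <= Y p t1.
Proof.
move=> hK.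
have /choice[CY CYP] p : exists C, forall u, u \in `[t0, t1]%R -> `|Y p u| <= C.
  apply: within_continuous_bounded (ltW t01) _.
  by apply: within_continuous_right_cvg => // u tu; have [] := dY p tu.
have YC p u : u \in `[t0, t1]%R -> `|Y p u| <= \sum_q `|CY q|.
  by move=> tu; apply: le_trans (CYP p u tu) (ler_sum_norm _ _).
have /choice[K KP] := hK (\sum_q `|CY q|).
apply: (nonneg_invariant_linear (K := \sum_q `|K q|)) => q u tu Yneg Ymin.
have u_in : u \in `[t0, t1]%R by case/andP: tu => t0u ut1; rewrite in_itv /= (ltW t0u).
apply: le_trans (KP q u tu Yneg (fun p => conj (Ymin p) (YC p u u_in))).
by apply: ler_wnM2r; [exact: ltW | exact: ler_sum_norm].
Qed.

End Invariance.

End RealAnalysis.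

Lemma mulr_ge_lb (R : realDomainType) (a b ma mb Ca Cb : R) :
  ma <= 0 -> mb <= 0 -> ma <= a -> mb <= b -> `|a| <= Ca -> `|b| <= Cb ->
  Cb * ma + Ca * mb <= a * b.
Proof.
move=> ma0 mb0 maa mbb; rewrite !ler_norml => /andP[a1 a2] /andP[b1 b2].
by case: (lerP 0 a) => a0; case: (lerP 0 b) => b0; nra.
Qed.

Lemma nmulr_lb_norm (R : realDomainType) (m b L : R) :
  m <= 0 -> `|b| <= L -> L * m <= - m * b.
Proof. by move=> m0 bL; rewrite mulrC mulNr -mulrN ler_wnM2l // lerNl lerNnormlW. Qed.

Section MatrixVector.
Variables (R : realType) (n : nat).
Implicit Types (M : 'I_n -> 'I_n -> R) (y z : 'I_n -> R).

Lemma kdeg_ge0 M i : (forall j, 0 <= M i j) -> 0 <= kdeg M i.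
Proof. by move=> M0; rewrite sumr_ge0. Qed.

Lemma mxv_ge M y i (c : R) :
  (forall j, 0 <= M i j) -> (forall j, c <= y j) -> kdeg M i * c <= mxv M y i.
Proof.
by move=> M0 cy; rewrite /kdeg big_distrl ler_sum // => j _; rewrite ler_wpM2l.
Qed.

Lemma norm_mxv_le M y i (c : R) :
  (forall j, 0 <= M i j) -> (forall j, `|y j| <= c) -> `|mxv M y i| <= kdeg M i * c.
Proof.
move=> M0 yc; rewrite /kdeg big_distrl; apply: le_trans (ler_norm_sum _ _ _) _.
by rewrite ler_sum // => j _; rewrite normrM ger0_norm // ler_wpM2l.
Qed.

Lemma mxvB M y z i : mxv M (fun j => y j - z j) i = mxv M y i - mxv M z i.
Proof. by rewrite /mxv -sumrB; apply: eq_bigr => j _; rewrite mulrBr. Qed.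

Lemma mxv_cst M (c : R) i : mxv M (fun=> c) i = kdeg M i * c.
Proof. by rewrite /kdeg big_distrl. Qed.

Lemma mxv_Hmat (DH Hmin : 'I_n -> 'I_n -> R) o y i :
  mxv (Hmat DH Hmin o) y i = o i * mxv DH y i + mxv Hmin y i.
Proof.
rewrite /mxv /Hmat mulr_sumr -big_split; apply: eq_bigr => j _ /=.
by rewrite mulrDl mulrA.
Qed.

End MatrixVector.

Section Rates.
Variables (R : realType) (n : nat).
Variables (A B Hmin DH : 'I_n -> 'I_n -> R) (gam om del : 'I_n -> R).
Implicit Types (o s x r v : 'I_n -> R).

Definition opinion_rate o x i := mxv A (fun j => x j - o j) i - 2 * lapv A o i.

Lemma opinion_rateE o x i :
  opinion_rate o x i = mxv A x i + mxv A o i - 2 * (kdeg A i * o i).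
Proof. by rewrite /opinion_rate mxvB /lapv; ring. Qed.

Definition susceptible_rate o s x r v i :=
  del i * v i - s i * (mxv B x i + mxv (Hmat DH Hmin o) v i) + om i * r i.

Definition infected_rate s x i := s i * mxv B x i - gam i * x i.

Definition recovered_rate o x r v i :=
  gam i * x i - om i * r i - r i * mxv (Hmat DH Hmin o) v i.

Definition vaccinated_rate o s r v i :=
  (s i + r i) * mxv (Hmat DH Hmin o) v i - del i * v i.

(* [1 - o] is tracked as a sixth compartment, so that [o <= 1] is also a
   nonnegativity statement. *)
Definition compartment (k : 'I_6) o s x r v i : R :=
  match val k with
  | 0 => s i | 1 => x i | 2 => r i | 3 => v i | 4 => o i | _ => 1 - o i
  end.

Definition compartment_rate (k : 'I_6) o s x r v i : R :=
  match val k with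
  | 0 => susceptible_rate o s x r v i
  | 1 => infected_rate s x i
  | 2 => recovered_rate o x r v i
  | 3 => vaccinated_rate o s r v i
  | 4 => opinion_rate o x i
  | _ => - opinion_rate o x i
  end.

Definition bounded_by (m C : R) (y : 'I_n -> R) := forall j, m <= y j /\ `|y j| <= C.

Hypotheses (hA : forall i j, 0 <= A i j) (hB : forall i j, 0 <= B i j).
Hypotheses (hHmin : forall i j, 0 <= Hmin i j) (hDH : forall i j, 0 <= DH i j).
Hypotheses (hgam : forall i, 0 <= gam i) (hom : forall i, 0 <= om i).
Hypothesis (hdel : forall i, 0 <= del i).

Section LowerBounds.
Variables (o s x r v : 'I_n -> R) (m C : R).
Hypothesis m_le0 : m <= 0.
Hypotheses (hs : bounded_by m C s) (hx : bounded_by m C x) (hr : bounded_by m C r).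
Hypotheses (hv : bounded_by m C v) (ho : bounded_by m C o).
Hypothesis ho' : bounded_by m C (fun j => 1 - o j).
Hypothesis hsum : forall j, s j + x j + r j + v j = 1.

Lemma norm_Hmat_mxv_le i :
  `|mxv (Hmat DH Hmin o) v i| <= (kdeg DH i * C + kdeg Hmin i) * C.
Proof.
have normv j : `|v j| <= C by case: (hv j).
rewrite mxv_Hmat; apply: le_trans (ler_normD _ _) _.
have -> : (kdeg DH i * C + kdeg Hmin i) * C = C * (kdeg DH i * C) + kdeg Hmin i * C.
  by ring.
rewrite normrM lerD ?norm_mxv_le // ler_pM ?norm_mxv_le //; by case: (ho i).
Qed.

Lemma Hmat_mxv_ge i :
  (2 * kdeg DH i * C + kdeg Hmin i) * m <= mxv (Hmat DH Hmin o) v i.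
Proof.
have lbv j : m <= v j by case: (hv j).
have normv j : `|v j| <= C by case: (hv j).
rewrite mxv_Hmat mulrDl; apply: lerD; last exact: mxv_ge.
have -> : 2 * kdeg DH i * C * m = kdeg DH i * C * m + C * (kdeg DH i * m) by ring.
apply: mulr_ge_lb => //; try by case: (ho i).
- by rewrite mulr_ge0_le0 ?kdeg_ge0.
- exact: mxv_ge.
- exact: norm_mxv_le.
Qed.

Lemma susceptible_rate_ge i : s i = m ->
  (del i + om i + kdeg B i * C + (kdeg DH i * C + kdeg Hmin i) * C) * m
    <= susceptible_rate o s x r v i.
Proof.
move=> si; rewrite /susceptible_rate si.
have normBx : `|mxv B x i| <= kdeg B i * C by apply: norm_mxv_le => // j; case: (hx j).
have := nmulr_lb_norm m_le0 (le_trans (ler_normD _ _) (lerD normBx (norm_Hmat_mxv_le i))).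
have : del i * m <= del i * v i by rewrite ler_wpM2l //; case: (hv i).
have : om i * m <= om i * r i by rewrite ler_wpM2l //; case: (hr i).
lra.
Qed.

Lemma infected_rate_ge i : x i = m -> 2 * kdeg B i * C * m <= infected_rate s x i.
Proof.
move=> xi; rewrite /infected_rate xi.
have : 2 * kdeg B i * C * m <= s i * mxv B x i.
  have -> : 2 * kdeg B i * C * m = kdeg B i * C * m + C * (kdeg B i * m) by ring.
  apply: mulr_ge_lb; try by case: (hs i).
  - by rewrite mulr_ge0_le0 ?kdeg_ge0.
  - by apply: mxv_ge => // j; case: (hx j).
  - by apply: norm_mxv_le => // j; case: (hx j).
have := mulr_ge0_le0 (hgam i) m_le0; lra.
Qed.

Lemma recovered_rate_ge i : r i = m ->
  (gam i + (kdeg DH i * C + kdeg Hmin i) * C) * m <= recovered_rate o x r v i.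
Proof.
move=> ri; rewrite /recovered_rate ri.
have := nmulr_lb_norm m_le0 (norm_Hmat_mxv_le i).
have : gam i * m <= gam i * x i by rewrite ler_wpM2l //; case: (hx i).
have := mulr_ge0_le0 (hom i) m_le0; lra.
Qed.

Lemma vaccinated_rate_ge i : v i = m ->
  2 * C * (3 * kdeg DH i * C + 2 * kdeg Hmin i) * m <= vaccinated_rate o s r v i.
Proof.
move=> vi; rewrite /vaccinated_rate vi.
have : 2 * C * (3 * kdeg DH i * C + 2 * kdeg Hmin i) * m
    <= (s i + r i) * mxv (Hmat DH Hmin o) v i.
  have -> : 2 * C * (3 * kdeg DH i * C + 2 * kdeg Hmin i) * m =
    (kdeg DH i * C + kdeg Hmin i) * C * (2 * m) +
    2 * C * ((2 * kdeg DH i * C + kdeg Hmin i) * m) by ring.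
  apply: mulr_ge_lb (Hmat_mxv_ge i) _ (norm_Hmat_mxv_le i).
  - by rewrite pmulr_rle0.
  - have C0 : 0 <= C := le_trans (normr_ge0 _) (hs i).2.
    by rewrite mulr_ge0_le0 // addr_ge0 ?kdeg_ge0 // mulr_ge0 ?mulr_ge0 ?kdeg_ge0.
  - by case: (hs i) => + _; case: (hr i) => + _; lra.
  - by case: (hs i) => _ +; case: (hr i) => _ +; have := ler_normD (s i) (r i); lra.
have := mulr_ge0_le0 (hdel i) m_le0; lra.
Qed.

Lemma opinion_rate_ge i : o i = m -> 2 * kdeg A i * m <= opinion_rate o x i.
Proof.
move=> oi; rewrite opinion_rateE oi.
have := mxv_ge (hA i) (fun j => (hx j).1); have := mxv_ge (hA i) (fun j => (ho j).1).
have := mulr_ge0_le0 (kdeg_ge0 (hA i)) m_le0; lra.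
Qed.

Lemma opinion_rate_le i : 1 - o i = m -> 2 * kdeg A i * m <= - opinion_rate o x i.
Proof.
move=> oi; rewrite opinion_rateE.
have -> : mxv A x i = kdeg A i - mxv A (fun j => s j + r j + v j) i.
  rewrite -[kdeg A i]mulr1 -mxv_cst -mxvB; congr mxv; apply/funext => j.
  by have := hsum j; lra.
have -> : mxv A o i = kdeg A i - mxv A (fun j => 1 - o j) i.
  by rewrite -[kdeg A i]mulr1 -mxv_cst -mxvB; congr mxv; apply/funext => j; lra.
have : kdeg A i * (3 * m) <= mxv A (fun j => s j + r j + v j) i.
  by apply: mxv_ge => // j; case: (hs j) => + _; case: (hr j) => + _; case: (hv j) => + _; lra.
have := mxv_ge (hA i) (fun j => (ho' j).1).
have -> : o i = 1 - m by lra.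
lra.
Qed.

End LowerBounds.

Lemma compartment_rate_ge (C : R) (k : 'I_6) (i : 'I_n) : exists K,
  forall o s x r v, let m := compartment k o s x r v i in
  m <= 0 -> (forall j, s j + x j + r j + v j = 1) ->
  bounded_by m C s -> bounded_by m C x -> bounded_by m C r -> bounded_by m C v ->
  bounded_by m C o -> bounded_by m C (fun j => 1 - o j) ->
  K * m <= compartment_rate k o s x r v i.
Proof.
case: k => [[|[|[|[|[|k]]]]] hk] /=; eexists => o s x r v m0 sum1 bs bx br bv bo bo'.
- by apply: susceptible_rate_ge.
- by apply: infected_rate_ge.
- by apply: recovered_rate_ge.
- by apply: vaccinated_rate_ge.
- by apply: opinion_rate_ge.
- exact: (opinion_rate_le bs br bv bo' sum1).
Qed.

End Rates.

Section Solution.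
Variables (R : realType) (n : nat).
Variables (A B Hmin DH : 'I_n -> 'I_n -> R) (gam om del : 'I_n -> R).
Hypotheses (hA : forall i j, 0 <= A i j) (hB : forall i j, 0 <= B i j).
Hypotheses (hHmin : forall i j, 0 <= Hmin i j) (hDH : forall i j, 0 <= DH i j).
Hypotheses (hgam : forall i, 0 <= gam i) (hom : forall i, 0 <= om i).
Hypothesis (hdel : forall i, 0 <= del i).
Variables (t0 : R) (o s x r v : R -> 'I_n -> R).
Hypothesis hsol : SIRSVo_solution A B Hmin DH gam om del t0 o s x r v.
Hypothesis hinit : forall i : 'I_n,
  [/\ 0 <= o t0 i <= 1, 0 <= s t0 i <= 1, 0 <= x t0 i <= 1,
      0 <= r t0 i <= 1 & 0 <= v t0 i <= 1].
Hypothesis hsum0 : forall i : 'I_n, s t0 i + x t0 i + r t0 i + v t0 i = 1.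

Lemma SIRSVo_sum_conserved t : t0 < t -> forall i, s t i + x t i + r t i + v t i = 1.
Proof.
move=> t0t i; rewrite -(hsum0 i).
apply: (is_derive0_eq_right (f := fun u => s u i + x u i + r u i + v u i)) t0t _ _.
- move=> u t0u; have [_ [ds [dx [dr dv]]]] := hsol.2 u t0u i.
  by apply: is_derive_eq (is_deriveD (is_deriveD (is_deriveD ds dx) dr) dv) _; ring.
- have [_ [ls [lx [lr lv]]]] := hsol.1 i.
  exact: cvgD (cvgD (cvgD ls lx) lr) lv.
Qed.

Let Y (p : 'I_6 * 'I_n) t := compartment p.1 (o t) (s t) (x t) (r t) (v t) p.2.
Let DY (p : 'I_6 * 'I_n) t :=
  compartment_rate A B Hmin DH gam om del p.1 (o t) (s t) (x t) (r t) (v t) p.2.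

Lemma compartment_is_derive p u : t0 < u -> is_derive u 1 (Y p) (DY p u).
Proof.
case: p => -[[|[|[|[|[|k]]]]] hk] i t0u; have [d_o [ds [dx [dr dv]]]] := hsol.2 u t0u i => //.
by have := is_deriveB (@is_derive_cst R R R 1 u 1) d_o; rewrite sub0r.
Qed.

Lemma compartment_cvg_right p : Y p y @[y --> t0^'+] --> Y p t0.
Proof.
case: p => -[[|[|[|[|[|k]]]]] hk] i; have [lo [ls [lx [lr lv]]]] := hsol.1 i => //.
by apply: cvgB; [exact: cvg_cst | exact: lo].
Qed.

Lemma compartment_init_ge0 p : 0 <= Y p t0.
Proof.
case: p => -[[|[|[|[|[|k]]]]] hk] i /=; rewrite /Y /compartment /=;
  case: (hinit i) => /andP[? ?] /andP[? ?] /andP[? ?] /andP[? ?] /andP[? ?]; lra.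
Qed.

Lemma compartment_quasipositive C q : exists K, forall u, t0 < u -> Y q u < 0 ->
  (forall p, Y q u <= Y p u /\ `|Y p u| <= C) -> K * Y q u <= DY q u.
Proof.
case: q => k i; have [K KP] := compartment_rate_ge hA hB hHmin hDH hgam hom hdel C k i.
exists K => u t0u Yneg hY; apply: KP.
- exact: ltW.
- exact: SIRSVo_sum_conserved.
- exact: (fun j => hY (@Ordinal 6 0 isT, j)).
- exact: (fun j => hY (@Ordinal 6 1 isT, j)).
- exact: (fun j => hY (@Ordinal 6 2 isT, j)).
- exact: (fun j => hY (@Ordinal 6 3 isT, j)).
- exact: (fun j => hY (@Ordinal 6 4 isT, j)).
- exact: (fun j => hY (@Ordinal 6 5 isT, j)).
Qed.

Lemma SIRSVo_ge0 t : t0 < t -> forall i,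
  [/\ 0 <= s t i, 0 <= x t i, 0 <= r t i & 0 <= v t i].
Proof.
move=> t0t i.
have Y_ge0 k : 0 <= Y (k, i) t.
  apply: nonneg_invariant t0t _ _ _ _ (k, i).
  - by move=> p u /andP[t0u _]; exact: compartment_is_derive.
  - exact: compartment_cvg_right.
  - exact: compartment_init_ge0.
  - move=> C q; have [K KP] := compartment_quasipositive C q.
    by exists K => u /andP[t0u _]; exact: KP.
split; [exact: (Y_ge0 (@Ordinal 6 0 isT)) | exact: (Y_ge0 (@Ordinal 6 1 isT)) |
        exact: (Y_ge0 (@Ordinal 6 2 isT)) | exact: (Y_ge0 (@Ordinal 6 3 isT))].
Qed.

End Solution.

Theorem lemma1 (R : realType) (n : nat)
  (A B Hmin DH : 'I_n -> 'I_n -> R) (gam om del : 'I_n -> R)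
  (hA : forall i j, 0 <= A i j) (hB : forall i j, 0 <= B i j)
  (hHmin : forall i j, 0 <= Hmin i j) (hDH : forall i j, 0 <= DH i j)
  (hgam : forall i, 0 <= gam i) (hom : forall i, 0 <= om i)
  (hdel : forall i, 0 <= del i)
  (t0 : R) (o s x r v : R -> 'I_n -> R)
  (hsol : SIRSVo_solution A B Hmin DH gam om del t0 o s x r v)
  (hinit : forall i : 'I_n,
     [/\ 0 <= o t0 i <= 1, 0 <= s t0 i <= 1, 0 <= x t0 i <= 1,
         0 <= r t0 i <= 1 & 0 <= v t0 i <= 1])
  (hsum0 : forall i : 'I_n, s t0 i + x t0 i + r t0 i + v t0 i = 1) :
  forall t : R, t0 < t -> forall i : 'I_n,
    s t i + x t i + r t i + v t i = 1 /\
    [/\ 0 <= s t i <= 1, 0 <= x t i <= 1, 0 <= r t i <= 1 & 0 <= v t i <= 1].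
Proof.
move=> t t0t i.
have sum1 := SIRSVo_sum_conserved hsol hsum0 t0t i.
have [s0 x0 r0 v0] := SIRSVo_ge0 hA hB hHmin hDH hgam hom hdel hsol hinit hsum0 t0t i.
by split => //; split; apply/andP; split; lra.
Qed.
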